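(* Let $k\ge1$, let $(A,t)$ be a $\mathcal{C}_k$-algebra and let $M\subseteq A$ be a proper cyclic deductive system. The following are equivalent: (1) $M$ is maximal; (2) for every $a\notin M$ there exists $m\in M$ with $\bigwedge_{j=1}^{k}t^j(\triangle a)\wedge m=0$; (3) for all $a,b\in A$, if $\bigwedge_{j=1}^{k}t^j(\triangle a)\vee b\in M$, then $a\in M$ or $b\in M$; (4) for every $a\notin M$, $\sim\triangle\bigwedge_{j=1}^{k}t^j(a)\in M$; (5) for all $a,b\notin M$, $a\rightharpoondown b\in M$ and $b\rightharpoondown a\in M$.
   Context: A modal pseudocomplemented De Morgan algebra ($mpM$-algebra) is an algebra $\langle A,\wedge,\vee,\sim,{}^\ast,0,1\rangle$ such that $\langle A,\wedge,\vee,\sim,0,1\rangle$ is a De Morgan algebra (bounded distributive lattice with $\sim\sim x=x$, $\sim(x\vee y)=\sim x\wedge\sim y$), $x^\ast$ is the pseudocomplement of $x$, and $x\vee\sim x\le x\vee x^\ast$. Put $\nabla x=\sim(\sim x\wedge x^\ast)$, $\triangle x=\sim\nabla\sim x$. A $\mathcal{C}_k$-algebra ($k\ge1$) is a pair $(A,t)$ with $A$ an $mpM$-algebra and $t$ an $mpM$-automorphism of $A$ with $t^k=\mathrm{id}$. The cyclic implication is $a\rightharpoondown b=\bigvee_{i=1}^{k}\nabla(\sim t^i(a))\vee b$. A cyclic deductive system is a set $D\subseteq A$ with $1\in D$ such that $x,\,x\rightharpoondown y\in D$ imply $y\in D$; it is maximal if it is maximal among proper cyclic deductive systems. *)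

From mathcomp Require Import all_boot all_order.
Set Implicit Arguments. Unset Strict Implicit. Unset Printing Implicit Defensive.
Import Order.TTheory.
Local Open Scope order_scope.

Section MpM.
Context {disp : Order.disp_t} {T : tbDistrLatticeType disp}.

(* A De Morgan algebra expanded by a pseudocomplement, satisfying
   x \/ ~x <= x \/ x^*  : an mpM-algebra structure on the bounded distributive lattice T. *)
Record is_mpM (neg star : T -> T) : Prop := IsMpM {
  mpM_negK : forall x, neg (neg x) = x;
  mpM_negU : forall x y, neg (x `|` y) = neg x `&` neg y;
  mpM_pseudo : forall x y, (y `&` x == \bot) = (y <= star x);
  mpM_ax : forall x, x `|` neg x <= x `|` star x
}.

Definition nabla (neg star : T -> T) (x : T) : T := neg (neg x `&` star x).
Definition delta (neg star : T -> T) (x : T) : T := neg (nabla neg star (neg x)).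

Record is_Ck_aut (neg star : T -> T) (k : nat) (t : T -> T) : Prop := IsCkAut {
  aut_bij : bijective t;
  aut_meet : forall x y, t (x `&` y) = t x `&` t y;
  aut_join : forall x y, t (x `|` y) = t x `|` t y;
  aut_neg : forall x, t (neg x) = neg (t x);
  aut_star : forall x, t (star x) = star (t x);
  aut_bot : t \bot = \bot;
  aut_top : t \top = \top;
  aut_period : forall x, iter k t x = x
}.

Definition cimp (neg star : T -> T) (k : nat) (t : T -> T) (a b : T) : T :=
  (\join_(1 <= i < k.+1) nabla neg star (neg (iter i t a))) `|` b.

Definition tmeet (k : nat) (t : T -> T) (x : T) : T :=
  \meet_(1 <= j < k.+1) iter j t x.

Definition cyclic_ds (neg star : T -> T) (k : nat) (t : T -> T) (D : T -> Prop) : Prop :=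
  D \top /\ (forall x y, D x -> D (cimp neg star k t x y) -> D y).

Definition proper_ds (D : T -> Prop) : Prop := exists x, ~ D x.

Definition maximal_cds (neg star : T -> T) (k : nat) (t : T -> T) (M : T -> Prop) : Prop :=
  cyclic_ds neg star k t M /\ proper_ds M /\
  forall N : T -> Prop, cyclic_ds neg star k t N -> proper_ds N ->
    (forall x, M x -> N x) -> forall x, N x -> M x.

End MpM.

From Stdlib Require Import Classical.
From mathcomp Require Import all_boot all_order.
Set Implicit Arguments. Unset Strict Implicit. Unset Printing Implicit Defensive.
Import Order.TTheory.
Local Open Scope order_scope.

(* The whole argument runs through the "cyclic Boolean kernel"
       K(x) = /\_{j=1}^k t^j (delta x).
   First, in any mpM-algebra, delta x is a complemented element whose
   Boolean complement is ~ (delta x), and delta preserves finite meets.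
   Since t is an automorphism of period k, K(x) is again complemented,
   K(x) <= x, K preserves meets, K (K x) = K x and delta (/\_j t^j x) = K x.
   Moreover the cyclic implication becomes  a -> b = ~ K(a) \/ b.
   Consequently a cyclic deductive system D is an up-set closed under meets
   and under K, and it is improper as soon as it contains \bot.
   For the equivalences: (1) <-> (2) compares M with the system generated by
   M and some a outside M, namely { y | K(a) /\ m <= y for some m in M };
   (2) <-> (3), (2) <-> (4) and (4) <-> (5) follow from the fact that K(a) is
   complemented, so K(a) /\ m = \bot  iff  m <= ~ K(a). *)

(* b is complemented, with the De Morgan negation as its complement. *)
Definition boolean {disp : Order.disp_t} {T : tbDistrLatticeType disp}
  (neg : T -> T) (b : T) : Prop := b `&` neg b = \bot.

Section MpMAlgebra.
Context {disp : Order.disp_t} {T : tbDistrLatticeType disp} {neg star : T -> T}.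
Hypothesis HA : is_mpM neg star.

Lemma negI x y : neg (x `&` y) = neg x `|` neg y.
Proof.
by rewrite -{1}(mpM_negK HA x) -{1}(mpM_negK HA y) -(mpM_negU HA) (mpM_negK HA).
Qed.

Lemma neg_le x y : x <= y -> neg y <= neg x.
Proof. by move=> le_xy; rewrite -(join_r le_xy) (mpM_negU HA) leIl. Qed.

Lemma neg_bot : neg \bot = \top.
Proof.
apply/eqP; rewrite eq_le lex1 /=.
by have := neg_le (le0x (neg \top)); rewrite (mpM_negK HA).
Qed.

Lemma neg_top : neg \top = \bot.
Proof. by rewrite -neg_bot (mpM_negK HA). Qed.

Lemma star_meet x : star x `&` x = \bot.
Proof. by apply/eqP; rewrite (mpM_pseudo HA). Qed.

Lemma star_anti x y : x <= y -> star y <= star x.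
Proof.
move=> le_xy; rewrite -(mpM_pseudo HA) -lex0.
by apply: le_trans (leI2 (lexx _) le_xy) _; rewrite star_meet.
Qed.

Lemma star_join x y : star (x `|` y) = star x `&` star y.
Proof.
apply/le_anti/andP; split; first by rewrite lexI !star_anti ?leUl ?leUr.
rewrite -(mpM_pseudo HA) meetUr [_ `&` x]meetAC star_meet meet0x.
by rewrite -meetA star_meet meetx0 joinx0.
Qed.

Lemma deltaE x : delta neg star x = x `&` star (neg x).
Proof. by rewrite /delta /nabla !(mpM_negK HA). Qed.

Lemma nablaN x : nabla neg star (neg x) = neg (delta neg star x).
Proof. by rewrite /delta (mpM_negK HA). Qed.

Lemma delta_le x : delta neg star x <= x.
Proof. by rewrite deltaE leIl. Qed.

Lemma delta_meet x y :
  delta neg star (x `&` y) = delta neg star x `&` delta neg star y.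
Proof. by rewrite !deltaE negI star_join meetACA. Qed.

Lemma delta_top : delta neg star \top = \top.
Proof.
rewrite deltaE neg_top meet1x.
by apply/eqP; rewrite eq_le lex1 -(mpM_pseudo HA) meetx0 eqxx.
Qed.

Lemma boolean_join b : boolean neg b -> b `|` neg b = \top.
Proof.
by move=> bb; have := congr1 neg bb; rewrite negI (mpM_negK HA) neg_bot joinC.
Qed.

Lemma boolean_le b m : boolean neg b -> m `&` b = \bot -> m <= neg b.
Proof.
by move=> bb mb0; rewrite -(meetx1 m) -(boolean_join bb) meetUr mb0 join0x leIr.
Qed.

Lemma boolean_meet a b : boolean neg a -> boolean neg b -> boolean neg (a `&` b).
Proof.
rewrite /boolean => ba bb; rewrite negI meetUr [(a `&` b) `&` neg a]meetAC ba.
by rewrite meet0x join0x -meetA bb meetx0.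
Qed.

Lemma boolean_top : boolean neg \top.
Proof. by rewrite /boolean neg_top meet1x. Qed.

Lemma delta_boolean x : boolean neg (delta neg star x).
Proof.
rewrite /boolean deltaE negI meetUr -meetA [star _ `&` neg x]star_meet meetx0 join0x.
have x_le : x <= neg x `|` star (neg x).
  have := mpM_ax HA (neg x); rewrite (mpM_negK HA).
  exact: le_trans (leUr x (neg x)).
have x_nstar_le : x `&` neg (star (neg x)) <= neg x.
  by have := neg_le x_le; rewrite (mpM_negU HA) (mpM_negK HA).
apply/eqP; rewrite -lex0 meetAC.
by apply: le_trans (leI2 x_nstar_le (lexx _)) _; rewrite meetC star_meet.
Qed.

Lemma delta_id b : boolean neg b -> delta neg star b = b.
Proof. by move=> bb; rewrite deltaE; apply/meet_idPl; rewrite -(mpM_pseudo HA) bb. Qed.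

Section Automorphism.
Context {k : nat} {t : T -> T}.
Hypothesis hk : (1 <= k)%N.
Hypothesis Ht : is_Ck_aut neg star k t.

Lemma iter_meet j x y : iter j t (x `&` y) = iter j t x `&` iter j t y.
Proof. by elim: j => //= j ->; rewrite (aut_meet Ht). Qed.

Lemma iter_neg j x : iter j t (neg x) = neg (iter j t x).
Proof. by elim: j => //= j ->; rewrite (aut_neg Ht). Qed.

Lemma iter_star j x : iter j t (star x) = star (iter j t x).
Proof. by elim: j => //= j ->; rewrite (aut_star Ht). Qed.

Lemma iter_bot j : iter j t \bot = \bot.
Proof. by elim: j => //= j ->; rewrite (aut_bot Ht). Qed.

Lemma iter_delta j x : iter j t (delta neg star x) = delta neg star (iter j t x).
Proof. by rewrite !deltaE iter_meet iter_star iter_neg. Qed.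

Lemma iter_boolean j b : boolean neg b -> boolean neg (iter j t b).
Proof. by rewrite /boolean -iter_neg -iter_meet => ->; rewrite iter_bot. Qed.

Lemma tmeet_le y : tmeet k t y <= y.
Proof. by rewrite /tmeet big_nat_recr //= (aut_period Ht) leIr. Qed.

(* ... and is t-invariant, since t^(k+1) = t. *)
Lemma tmeet_invariant y : t (tmeet k t y) = tmeet k t y.
Proof.
have t_period : t (t (iter k.-1 t y)) = t y.
  by rewrite -iterS prednK // (aut_period Ht).
rewrite /tmeet (big_morph t (aut_meet Ht) (aut_top Ht)) -(prednK hk).
by rewrite big_nat_recr // [RHS]big_nat_recl //= prednK // t_period meetC.
Qed.

Lemma tmeet_fixed y : t y = y -> tmeet k t y = y.
Proof.
move=> ty; have iter_y j : iter j t y = y by elim: j => //= j ->.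
apply/le_anti; rewrite tmeet_le /=.
by apply/meetsP_seq => j _ _; rewrite iter_y.
Qed.

Local Notation kernel x := (tmeet k t (delta neg star x)).

Lemma kernel_boolean x : boolean neg (kernel x).
Proof.
apply: (big_ind (boolean neg)); [exact: boolean_top | exact: boolean_meet |].
by move=> j _; apply/iter_boolean/delta_boolean.
Qed.

Lemma kernel_le x : kernel x <= x.
Proof. exact: le_trans (tmeet_le _) (delta_le x). Qed.

Lemma kernel_meet x y : kernel (x `&` y) = kernel x `&` kernel y.
Proof.
by rewrite /tmeet -big_split; apply: eq_bigr => j _; rewrite delta_meet iter_meet.
Qed.

Lemma kernel_mono x y : x <= y -> kernel x <= kernel y.
Proof. by move=> le_xy; rewrite -(meet_idPl le_xy) kernel_meet leIr. Qed.

Lemma kernel_idem x : kernel (kernel x) = kernel x.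
Proof. by rewrite (delta_id (kernel_boolean x)) tmeet_fixed // tmeet_invariant. Qed.

Lemma delta_tmeet a : delta neg star (tmeet k t a) = kernel a.
Proof.
rewrite /tmeet (big_morph _ delta_meet delta_top).
by apply: eq_bigr => j _; rewrite iter_delta.
Qed.

Lemma cimpE a b : cimp neg star k t a b = neg (kernel a) `|` b.
Proof.
rewrite /cimp /tmeet (big_morph neg negI neg_top); congr (_ `|` b).
by apply: eq_bigr => i _; rewrite nablaN iter_delta.
Qed.

Section DeductiveSystems.
Variable D : T -> Prop.
Hypothesis HD : cyclic_ds neg star k t D.

Lemma cds_up x y : D x -> x <= y -> D y.
Proof.
move=> Dx le_xy; apply: (proj2 HD x) => //.
suff -> : cimp neg star k t x y = \top by exact: (proj1 HD).
apply/eqP; rewrite eq_le lex1 /= cimpE -(boolean_join (kernel_boolean x)) joinC.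
by apply: leU2 => //; apply: le_trans (kernel_le x) le_xy.
Qed.

Lemma cds_meet x y : D x -> D y -> D (x `&` y).
Proof.
move=> Dx Dy; apply: (proj2 HD y) => //; apply: (cds_up Dx).
rewrite cimpE joinIr lexI leUr /=; apply: le_trans (lex1 x) _.
by rewrite -(boolean_join (kernel_boolean y)) joinC leU2 ?kernel_le.
Qed.

Lemma cds_kernel x : D x -> D (kernel x).
Proof.
move=> Dx; apply: (proj2 HD x) => //.
by rewrite cimpE joinC (boolean_join (kernel_boolean x)); exact: (proj1 HD).
Qed.

Lemma proper_cds_bot : proper_ds D -> ~ D \bot.
Proof. by case=> z nDz Dbot; apply/nDz/(cds_up Dbot (le0x z)). Qed.

End DeductiveSystems.

Section MaximalSystems.
Variable M : T -> Prop.
Hypothesis HM : cyclic_ds neg star k t M.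
Hypothesis HMp : proper_ds M.

Definition extension (a y : T) : Prop := exists2 m, M m & kernel a `&` m <= y.

Lemma extension_cds a : cyclic_ds neg star k t (extension a).
Proof.
split; first by exists \top; [exact: (proj1 HM) | exact: lex1].
move=> x y [m1 Mm1 le_x] [m2 Mm2]; rewrite cimpE => le_imp.
exists (kernel m1 `&` m2); first exact: (cds_meet HM (cds_kernel HM Mm1) Mm2).
have kernel_le_x : kernel a `&` kernel m1 <= kernel x.
  by rewrite -{1}kernel_idem -kernel_meet kernel_mono.
apply: le_trans (_ : _ <= (kernel a `&` kernel m1) `&` (kernel a `&` m2)) _.
  by rewrite meetACA meetxx.
apply: le_trans (leI2 kernel_le_x le_imp) _.
by rewrite meetUr (kernel_boolean x) join0x leIr.
Qed.

Lemma extension_incl a x : M x -> extension a x.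
Proof. by move=> Mx; exists x => //; exact: leIr. Qed.

Lemma extension_self a : extension a a.
Proof. by exists \top; [exact: (proj1 HM) | rewrite meetx1 kernel_le]. Qed.

Lemma maximal_iff_annihilator :
  maximal_cds neg star k t M <->
  forall a, ~ M a -> exists2 m, M m & kernel a `&` m = \bot.
Proof.
split=> [[_ [_ Mmax]] a nMa | annih].
  have [N_proper|N_improper] := classic (proper_ds (extension a)).
    case: nMa; apply: (Mmax _ (extension_cds a) N_proper (@extension_incl a)).
    exact: extension_self.
  have [m Mm le_bot] : extension a \bot.
    by apply: NNPP => nNbot; apply: N_improper; exists \bot.
  by exists m => //; apply/eqP; rewrite -lex0.
split=> //; split=> // N HN HNp MN x Nx; apply: NNPP => nMx.
have [m Mm kernel_m0] := annih x nMx.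
apply: (proper_cds_bot HN HNp); rewrite -kernel_m0.
exact: (cds_meet HN (cds_kernel HN Nx) (MN _ Mm)).
Qed.

Lemma annihilator_iff_prime :
  (forall a, ~ M a -> exists2 m, M m & kernel a `&` m = \bot) <->
  (forall a b, M (kernel a `|` b) -> M a \/ M b).
Proof.
split=> [annih a b Mab | prime a nMa].
  have [Ma|nMa] := classic (M a); [by left | right].
  have [m Mm kernel_m0] := annih a nMa.
  apply: (cds_up HM (cds_meet HM Mab Mm)).
  by rewrite meetUl kernel_m0 join0x leIl.
exists (neg (kernel a)); last exact: kernel_boolean.
have Mtop : M (kernel a `|` neg (kernel a)).
  by rewrite (boolean_join (kernel_boolean a)); exact: (proj1 HM).
by case: (prime a _ Mtop) => // /nMa.
Qed.

Lemma annihilator_iff_negdelta :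
  (forall a, ~ M a -> exists2 m, M m & kernel a `&` m = \bot) <->
  (forall a, ~ M a -> M (neg (delta neg star (tmeet k t a)))).
Proof.
split=> [annih a nMa | negdelta a nMa].
  have [m Mm kernel_m0] := annih a nMa; rewrite delta_tmeet.
  by apply: (cds_up HM Mm); apply: boolean_le (kernel_boolean a) _; rewrite meetC.
exists (neg (kernel a)); last exact: kernel_boolean.
by rewrite -delta_tmeet; exact: negdelta.
Qed.

Lemma negdelta_iff_cimp :
  (forall a, ~ M a -> M (neg (delta neg star (tmeet k t a)))) <->
  (forall a b, ~ M a -> ~ M b ->
     M (cimp neg star k t a b) /\ M (cimp neg star k t b a)).
Proof.
split=> [negdelta a b nMa nMb | cimp_in a nMa].
  have := negdelta a nMa; have := negdelta b nMb; rewrite !delta_tmeet !cimpE.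
  by move=> Mb Ma; split; [apply: (cds_up HM Ma) | apply: (cds_up HM Mb)]; exact: leUl.
have [Mimp _] := cimp_in a \bot nMa (proper_cds_bot HM HMp).
by rewrite delta_tmeet; rewrite cimpE joinx0 in Mimp.
Qed.

End MaximalSystems.
End Automorphism.
End MpMAlgebra.

Theorem theorem4p3 (disp : Order.disp_t) (T : tbDistrLatticeType disp)
  (neg star : T -> T) (HA : is_mpM neg star)
  (k : nat) (hk : (1 <= k)%N) (t : T -> T) (Ht : is_Ck_aut neg star k t)
  (M : T -> Prop) (HM : cyclic_ds neg star k t M) (HMp : proper_ds M) :
  [/\ (maximal_cds neg star k t M <->
        forall a, ~ M a -> exists2 m, M m & tmeet k t (delta neg star a) `&` m = \bot),
      (maximal_cds neg star k t M <->
        forall a b, M (tmeet k t (delta neg star a) `|` b) -> M a \/ M b),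
      (maximal_cds neg star k t M <->
        forall a, ~ M a -> M (neg (delta neg star (tmeet k t a)))) &
      (maximal_cds neg star k t M <->
        forall a b, ~ M a -> ~ M b -> M (cimp neg star k t a b) /\ M (cimp neg star k t b a))].
Proof.
have e12 := maximal_iff_annihilator HA hk Ht HM HMp.
have e23 := annihilator_iff_prime HA hk Ht HM.
have e24 := annihilator_iff_negdelta HA hk Ht HM.
have e45 := negdelta_iff_cimp HA hk Ht HM HMp.
split=> //; [exact: iff_trans e12 e23 | exact: iff_trans e12 e24 |].
exact: iff_trans (iff_trans e12 e24) e45.
Qed.
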